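(* Let $(X,\mathcal{U})$ be a sequentially complete separated uniform space, with $\mathcal{F}$ and $\mathcal{V}$ as in the context, and let $T:X\to X$ be a Ćirić-contraction. Then for each $x\in X$ the sequence $\{T^nx\}$ converges to a fixed point of $T$. Moreover, if the functions $a_2$ and $a_3$ in the contractive condition coincide on $X\times X$, then the fixed point is unique, i.e. there is a unique fixed point $x^*$ of $T$ and $\{T^nx\}$ converges to $x^*$ for every $x\in X$.
   Context: A uniform space $(X,\mathcal{U})$ is a nonempty set $X$ with a uniformity $\mathcal{U}$ on $X$. For $U,V\subseteq X\times X$, $\Delta(X)=\{(x,x):x\in X\}$ and $U\circ V=\{(x,y):\exists z\in X,\ (x,z)\in V,\ (z,y)\in U\}$. $X$ is separated if $\bigcap\mathcal{U}=\Delta(X)$. A sequence $\{x_n\}$ converges to $x$ if for every $U\in\mathcal{U}$ there is $N$ with $(x_n,x)\in U$ for $n\ge N$; it is Cauchy if for every $U\in\mathcal{U}$ there is $N$ with $(x_m,x_n)\in U$ for $m,n\ge N$; $X$ is sequentially complete if every Cauchy sequence converges. $\mathcal{F}$ is a nonempty collection of (uniformly continuous) pseudometrics on $X$ generating $\mathcal{U}$, and $\mathcal{V}$ is the family of all sets $V=\bigcap_{i=1}^m\{(x,y)\in X\times X:\rho_i(x,y)<r_i\}$ with $m\ge1$, $\rho_i\in\mathcal{F}$, $r_i>0$; $\mathcal{V}$ is a base for $\mathcal{U}$. For such $V$ and $\beta>0$, $\beta V=\bigcap_{i=1}^m\{(x,y):\rho_i(x,y)<\beta r_i\}$. A map $T:X\to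 X$ is a Ćirić-contraction if there are positive-valued functions $a_1,a_2,a_3,a_4$ on $X\times X$ with $\sup\{a_1(x,y)+a_2(x,y)+a_3(x,y)+2a_4(x,y):x,y\in X\}<1$ such that for all $x,y\in X$ and all $V_1,\dots,V_5\in\mathcal{V}$: if $(x,y)\in V_1$, $(x,Tx)\in V_2$, $(y,Ty)\in V_3$, $(x,Ty)\in V_4$, $(y,Tx)\in V_5$, then $(Tx,Ty)\in a_1(x,y)V_1\circ a_2(x,y)V_2\circ a_3(x,y)V_3\circ a_4(x,y)V_4\circ a_4(x,y)V_5$. *)

From Stdlib Require Import Reals List.
Open Scope R_scope.
Import ListNotations.

Set Implicit Arguments.

Definition is_pseudometric (X : Type) (d : X -> X -> R) : Prop :=
  (forall x, d x x = 0) /\ (forall x y, d x y = d y x) /\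
  (forall x y z, d x z <= d x y + d y z).

Definition pm_family (X : Type) (F : (X -> X -> R) -> Prop) : Prop :=
  (exists rho, F rho) /\ (forall rho, F rho -> is_pseudometric rho).

(* A basic entourage V = /\_{i} {(x,y) | rho_i x y < r_i} is represented by its
   (nonempty) list of pairs (rho_i, r_i) with rho_i in F and r_i > 0. *)
Definition basic_rep (X : Type) := list ((X -> X -> R) * R).

Definition valid_rep (X : Type) (F : (X -> X -> R) -> Prop) (l : basic_rep X) : Prop :=
  l <> [] /\ Forall (fun p => F (fst p) /\ 0 < snd p) l.

Definition vset (X : Type) (l : basic_rep X) (x y : X) : Prop :=
  Forall (fun p => fst p x y < snd p) l.

Definition vscale (X : Type) (beta : R) (l : basic_rep X) : basic_rep X :=
  map (fun p => (fst p, beta * snd p)) l.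

(* U o V = {(x,y) | exists z, (x,z) in V, (z,y) in U} *)
Definition rcomp (X : Type) (U V : X -> X -> Prop) (x y : X) : Prop :=
  exists z, V x z /\ U z y.

Definition unif (X : Type) (F : (X -> X -> R) -> Prop) (W : X -> X -> Prop) : Prop :=
  exists l, valid_rep F l /\ forall x y, vset l x y -> W x y.

Definition separated (X : Type) (F : (X -> X -> R) -> Prop) : Prop :=
  forall x y : X, (forall W, unif F W -> W x y) <-> x = y.

Definition converges (X : Type) (F : (X -> X -> R) -> Prop) (u : nat -> X) (x : X) : Prop :=
  forall W, unif F W -> exists N, forall n, (N <= n)%nat -> W (u n) x.

Definition cauchy (X : Type) (F : (X -> X -> R) -> Prop) (u : nat -> X) : Prop :=
  forall W, unif F W -> exists N, forall m n, (N <= m)%nat -> (N <= n)%nat -> W (u m) (u n).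

Definition seq_complete (X : Type) (F : (X -> X -> R) -> Prop) : Prop :=
  forall u : nat -> X, cauchy F u -> exists x, converges F u x.

Definition ciric_with (X : Type) (F : (X -> X -> R) -> Prop) (T : X -> X)
  (a1 a2 a3 a4 : X -> X -> R) : Prop :=
  (forall x y, 0 < a1 x y /\ 0 < a2 x y /\ 0 < a3 x y /\ 0 < a4 x y) /\
  (exists k, k < 1 /\ forall x y, a1 x y + a2 x y + a3 x y + 2 * a4 x y <= k) /\
  (forall x y (V1 V2 V3 V4 V5 : basic_rep X),
     valid_rep F V1 -> valid_rep F V2 -> valid_rep F V3 ->
     valid_rep F V4 -> valid_rep F V5 ->
     vset V1 x y -> vset V2 x (T x) -> vset V3 y (T y) ->
     vset V4 x (T y) -> vset V5 y (T x) ->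
     rcomp (vset (vscale (a1 x y) V1))
       (rcomp (vset (vscale (a2 x y) V2))
         (rcomp (vset (vscale (a3 x y) V3))
           (rcomp (vset (vscale (a4 x y) V4)) (vset (vscale (a4 x y) V5)))))
       (T x) (T y)).

Definition ciric (X : Type) (F : (X -> X -> R) -> Prop) (T : X -> X) : Prop :=
  exists a1 a2 a3 a4, ciric_with F T a1 a2 a3 a4.

From Stdlib Require Import Reals List Lra Lia Psatz.
Open Scope R_scope.
Import ListNotations.

(* Testing the contractive condition on one-element basic entourages
   [{rho < r}] with radii just above the relevant distances turns it into the
   metric Ćirić inequality
     rho(Tx,Ty) <= a1 rho(x,y) + a2 rho(x,Tx) + a3 rho(y,Ty) + a4 (rho(x,Ty) + rho(y,Tx))
   for every pseudometric rho of the family.  For a single pseudometric this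
   gives rho(T y, T^2 y) <= k rho(y, T y), so orbits are rho-Cauchy, and a
   rho-limit p of an orbit satisfies (1 - k) rho(p, T p) <= 0.  Since the
   uniformity is generated by the family and is separated, orbits are Cauchy,
   their limits are fixed points, and two fixed points coincide because
   rho(p, q) <= (a1 + 2 a4) rho(p, q). *)

Lemma pseudometric_nonneg {X : Type} {d : X -> X -> R} :
  is_pseudometric d -> forall x y, 0 <= d x y.
Proof.
  intros [d0 [dsym dtri]] x y.
  pose proof (dtri x y x) as H. rewrite d0, (dsym y x) in H. lra.
Qed.

Lemma vset_singleton {X : Type} (rho : X -> X -> R) r x y :
  vset [(rho, r)] x y <-> rho x y < r.
Proof.
  unfold vset; split; intro H.
  - exact (Forall_inv H).
  - constructor; [exact H | constructor].
Qed.

Lemma valid_rep_singleton {X : Type} {F : (X -> X -> R) -> Prop} rho r :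
  F rho -> 0 < r -> valid_rep F [(rho, r)].
Proof. intros Hrho Hr; split; [discriminate | constructor; [split; assumption | constructor]]. Qed.

Lemma rcomp_lt_add {X : Type} {rho : X -> X -> R} {A B : X -> X -> Prop} {r s x y} :
  is_pseudometric rho ->
  (forall a b, A a b -> rho a b < r) -> (forall a b, B a b -> rho a b < s) ->
  rcomp A B x y -> rho x y < r + s.
Proof.
  intros [_ [_ rtri]] HA HB [z [Hxz Hzy]].
  pose proof (rtri x z y). pose proof (HA z y Hzy). pose proof (HB x z Hxz). lra.
Qed.

Lemma vset_scale_singleton_lt {X : Type} {rho : X -> X -> R} {c r a b} :
  vset (vscale c [(rho, r)]) a b -> rho a b < c * r.
Proof. exact (proj1 (vset_singleton rho (c * r) a b)). Qed.

Lemma ciric_with_nonneg {X : Type} {F} {T : X -> X} {a1 a2 a3 a4} :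
  ciric_with F T a1 a2 a3 a4 ->
  forall x y, 0 <= a1 x y /\ 0 <= a2 x y /\ 0 <= a3 x y /\ 0 <= a4 x y.
Proof. intros [Hpos _] x y; destruct (Hpos x y) as (? & ? & ? & ?); lra. Qed.

Lemma ciric_with_pm_contract {X : Type} {F} {T : X -> X} {a1 a2 a3 a4 rho} :
  pm_family F -> ciric_with F T a1 a2 a3 a4 -> F rho -> forall x y,
  rho (T x) (T y) <= a1 x y * rho x y + a2 x y * rho x (T x) + a3 x y * rho y (T y)
                     + a4 x y * (rho x (T y) + rho y (T x)).
Proof.
  intros [_ Hpm] HC Hrho x y.
  pose proof (Hpm rho Hrho) as Hd.
  pose proof (pseudometric_nonneg Hd) as hn.
  destruct HC as [Hpos [_ Hcontr]]. destruct (Hpos x y) as (p1 & p2 & p3 & p4).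
  set (c := a1 x y + a2 x y + a3 x y + 2 * a4 x y).
  apply Rle_plus_epsilon; intros eps Heps.
  set (e := eps / c).
  assert (He : 0 < e) by (apply Rdiv_lt_0_compat; unfold c; lra).
  assert (Hce : c * e = eps) by (unfold e, c; field; lra).
  assert (Hval : forall a b, valid_rep F [(rho, rho a b + e)]).
  { intros a b; apply valid_rep_singleton; [exact Hrho | pose proof (hn a b); lra]. }
  assert (Hin : forall a b, vset [(rho, rho a b + e)] a b).
  { intros a b; apply vset_singleton; lra. }
  pose proof (Hcontr x y _ _ _ _ _ (Hval x y) (Hval x (T x)) (Hval y (T y))
                (Hval x (T y)) (Hval y (T x)) (Hin x y) (Hin x (T x)) (Hin y (T y))
                (Hin x (T y)) (Hin y (T x))) as Hchain.
  pose proof (fun c r a b => @vset_scale_singleton_lt X rho c r a b) as Hsingle.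
  pose proof (rcomp_lt_add Hd (Hsingle _ _)
               (fun _ _ => rcomp_lt_add Hd (Hsingle _ _)
                 (fun _ _ => rcomp_lt_add Hd (Hsingle _ _)
                   (fun _ _ => rcomp_lt_add Hd (Hsingle _ _) (Hsingle _ _))))
               Hchain).
  unfold c in Hce; lra.
Qed.

Lemma geometric_tail_bound {X : Type} {d : X -> X -> R} {u : nat -> X} {k c : R} :
  is_pseudometric d -> 0 <= k <= 1 ->
  (forall n, d (u n) (u (S n)) <= k ^ n * c) ->
  forall m j, (1 - k) * d (u m) (u (m + j)%nat) <= k ^ m * c - k ^ (m + j) * c.
Proof.
  intros [d0 [_ dtri]] Hk Hstep m j; induction j as [|j IH].
  - rewrite Nat.add_0_r, d0; lra.
  - rewrite Nat.add_succ_r.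
    pose proof (dtri (u m) (u (m + j)%nat) (u (S (m + j)))).
    pose proof (Hstep (m + j)%nat).
    change (k ^ S (m + j)) with (k * k ^ (m + j)).
    nra.
Qed.

Lemma cauchy_of_geometric_steps {X : Type} {d : X -> X -> R} {u : nat -> X} {k c : R} :
  is_pseudometric d -> 0 <= k < 1 ->
  (forall n, d (u n) (u (S n)) <= k ^ n * c) ->
  forall e, 0 < e -> exists N, forall m n, (N <= m)%nat -> (N <= n)%nat -> d (u m) (u n) < e.
Proof.
  intros Hd [Hk0 Hk1] Hstep e He.
  pose proof (pseudometric_nonneg Hd) as hn.
  assert (Hc : 0 <= c) by (pose proof (Hstep O); pose proof (hn (u O) (u 1%nat)); simpl in *; lra).
  assert (Hy : 0 < e * (1 - k) / (c + 1)) by (apply Rdiv_lt_0_compat; nra).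
  destruct (pow_lt_1_zero k ltac:(rewrite Rabs_pos_eq; lra) _ Hy) as [N HN].
  assert (Htail : forall m j, (N <= m)%nat -> d (u m) (u (m + j)%nat) < e).
  { intros m j Hm.
    specialize (HN m Hm). rewrite Rabs_pos_eq in HN by (apply pow_le; lra).
    pose proof (geometric_tail_bound Hd (conj Hk0 (Rlt_le _ _ Hk1)) Hstep m j).
    pose proof (pow_le k (m + j) Hk0). pose proof (pow_le k m Hk0).
    assert (k ^ m * (c + 1) < e * (1 - k)).
    { replace (e * (1 - k)) with (e * (1 - k) / (c + 1) * (c + 1)) by (field; lra).
      apply Rmult_lt_compat_r; lra. }
    nra. }
  exists N; intros m n Hm Hn.
  destruct (Nat.le_gt_cases m n) as [L | L].
  - replace n with (m + (n - m))%nat by lia. apply Htail; lia.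
  - destruct Hd as [_ [dsym _]]. rewrite dsym.
    replace m with (n + (m - n))%nat by lia. apply Htail; lia.
Qed.

Section PseudometricCiric.

Context {X : Type} {d : X -> X -> R} {T : X -> X} {a1 a2 a3 a4 : X -> X -> R} {k : R}.

Hypothesis d_pm : is_pseudometric d.
Hypothesis a_nonneg : forall x y, 0 <= a1 x y /\ 0 <= a2 x y /\ 0 <= a3 x y /\ 0 <= a4 x y.
Hypothesis a_sum_le : forall x y, a1 x y + a2 x y + a3 x y + 2 * a4 x y <= k.
Hypothesis k_lt_1 : k < 1.
Hypothesis d_contract : forall x y,
  d (T x) (T y) <= a1 x y * d x y + a2 x y * d x (T x) + a3 x y * d y (T y)
                   + a4 x y * (d x (T y) + d y (T x)).

Lemma k_nonneg (x : X) : 0 <= k.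
Proof. pose proof (a_nonneg x x); pose proof (a_sum_le x x); lra. Qed.

Lemma orbit_step y : d (T y) (T (T y)) <= k * d y (T y).
Proof.
  destruct d_pm as [d0 [_ dtri]].
  pose proof (pseudometric_nonneg d_pm) as hn.
  pose proof (d_contract y (T y)) as H. rewrite d0 in H.
  pose proof (dtri y (T y) (T (T y))) as Htri.
  pose proof (a_nonneg y (T y)) as (p1 & p2 & p3 & p4). pose proof (a_sum_le y (T y)).
  pose proof (hn y (T y)). pose proof (hn (T y) (T (T y))).
  set (D := d (T y) (T (T y))) in *. set (r := d y (T y)) in *.
  assert (Hsplit : a4 y (T y) * d y (T (T y)) <= a4 y (T y) * (r + D))
    by (apply Rmult_le_compat_l; lra).
  destruct (Rle_or_lt D (k * r)) as [Q | Q]; [exact Q | exfalso].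
  assert ((1 - a3 y (T y) - a4 y (T y)) * (D - k * r) > 0) by (apply Rmult_gt_0_compat; lra).
  assert ((a3 y (T y) + a4 y (T y)) * (1 - k) * r >= 0)
    by (apply Rle_ge, Rmult_le_pos; [apply Rmult_le_pos |]; lra).
  nra.
Qed.

Lemma orbit_step_geometric x n :
  d (Nat.iter n T x) (Nat.iter (S n) T x) <= k ^ n * d x (T x).
Proof.
  pose proof (k_nonneg x).
  induction n as [|n IH]; simpl in *; [lra |].
  pose proof (orbit_step (Nat.iter n T x)). nra.
Qed.

Lemma orbit_cauchy x e : 0 < e ->
  exists N, forall m n, (N <= m)%nat -> (N <= n)%nat ->
    d (Nat.iter m T x) (Nat.iter n T x) < e.
Proof.
  apply (cauchy_of_geometric_steps (k := k) (c := d x (T x)) d_pm).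
  - split; [exact (k_nonneg x) | exact k_lt_1].
  - exact (orbit_step_geometric x).
Qed.

(* This is the contraction inequality at (y, p), where the terms d(y, Tp) and
   d(y, Ty) are split through p. *)
Lemma fixed_defect_le y p : (1 - k) * d p (T p) <= 2 * (d y p + d (T y) p).
Proof.
  destruct d_pm as [_ [dsym dtri]].
  pose proof (pseudometric_nonneg d_pm) as hn.
  pose proof (d_contract y p) as H. rewrite (dsym p (T y)) in H.
  pose proof (dtri p (T y) (T p)). pose proof (dtri y p (T y)). pose proof (dtri y p (T p)).
  rewrite (dsym p (T y)) in *.
  pose proof (a_nonneg y p) as (p1 & p2 & p3 & p4). pose proof (a_sum_le y p).
  pose proof (hn y p). pose proof (hn (T y) p). pose proof (hn p (T p)).
  assert (a2 y p * d y (T y) <= a2 y p * (d y p + d (T y) p)) by (apply Rmult_le_compat_l; lra).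
  assert (a4 y p * d y (T p) <= a4 y p * (d y p + d p (T p))) by (apply Rmult_le_compat_l; lra).
  nra.
Qed.

Lemma orbit_limit_fixed x p :
  (forall e, 0 < e -> exists N, forall n, (N <= n)%nat -> d (Nat.iter n T x) p < e) ->
  d p (T p) = 0.
Proof.
  intros Hconv.
  assert (Hdef : (1 - k) * d p (T p) <= 0).
  { apply Rle_plus_epsilon; intros eps Heps.
    destruct (Hconv (eps / 4) ltac:(lra)) as [N HN].
    pose proof (HN N (le_n N)). pose proof (HN (S N) (le_S _ _ (le_n N))).
    pose proof (fixed_defect_le (Nat.iter N T x) p). simpl in *. lra. }
  pose proof (pseudometric_nonneg d_pm p (T p)).
  assert (d p (T p) <= 0) by nra. lra.
Qed.

Lemma fixed_points_dist_zero p q : T p = p -> T q = q -> d p q = 0.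
Proof.
  intros Hp Hq.
  destruct d_pm as [d0 [dsym _]].
  pose proof (d_contract p q) as H.
  rewrite Hp, Hq, !d0, (dsym q p) in H.
  pose proof (a_nonneg p q). pose proof (a_sum_le p q).
  pose proof (pseudometric_nonneg d_pm p q).
  nra.
Qed.

End PseudometricCiric.

Lemma vset_eventually_of_pm_cauchy {X : Type} {F : (X -> X -> R) -> Prop} {u : nat -> X} :
  (forall rho, F rho -> forall e, 0 < e ->
     exists N, forall m n, (N <= m)%nat -> (N <= n)%nat -> rho (u m) (u n) < e) ->
  forall l : basic_rep X, Forall (fun p => F (fst p) /\ 0 < snd p) l ->
  exists N, forall m n, (N <= m)%nat -> (N <= n)%nat -> vset l (u m) (u n).
Proof.
  intros H l. induction l as [|[rho r] l IH]; intros Hl.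
  - exists O; intros; constructor.
  - destruct (Forall_inv Hl) as [Hr Hr0].
    destruct (IH (Forall_inv_tail Hl)) as [N1 H1].
    destruct (H rho Hr r Hr0) as [N2 H2].
    exists (max N1 N2); intros m n Hm Hn.
    constructor; [apply H2; lia | apply H1; lia].
Qed.

Lemma cauchy_of_pm_cauchy {X : Type} {F : (X -> X -> R) -> Prop} {u : nat -> X} :
  (forall rho, F rho -> forall e, 0 < e ->
     exists N, forall m n, (N <= m)%nat -> (N <= n)%nat -> rho (u m) (u n) < e) ->
  cauchy F u.
Proof.
  intros H W [l [[_ Hl] HW]].
  destruct (vset_eventually_of_pm_cauchy H l Hl) as [N HN].
  exists N; intros; apply HW, HN; assumption.
Qed.

Lemma converges_pm {X : Type} {F : (X -> X -> R) -> Prop} {u : nat -> X} {p rho e} :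
  converges F u p -> F rho -> 0 < e -> exists N, forall n, (N <= n)%nat -> rho (u n) p < e.
Proof.
  intros H Hr He. apply (H (fun a b => rho a b < e)).
  exists [(rho, e)]; split; [apply valid_rep_singleton; assumption |].
  intros a b Hab; apply vset_singleton; exact Hab.
Qed.

Lemma separated_eq_of_pm_zero {X : Type} {F : (X -> X -> R) -> Prop} {x y} :
  separated F -> (forall rho, F rho -> rho x y = 0) -> x = y.
Proof.
  intros Hs H. apply (proj1 (Hs x y)). intros W [l [[_ Hl] HW]]. apply HW.
  eapply Forall_impl; [| exact Hl].
  intros [rho r] [Hr Hr0]; simpl in *. rewrite (H rho Hr). exact Hr0.
Qed.

Theorem corollary1 (X : Type) (x0 : X) (F : (X -> X -> R) -> Prop) (T : X -> X) :
  pm_family F -> separated F -> seq_complete F -> ciric F T ->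
  (forall x, exists p, T p = p /\ converges F (fun n => Nat.iter n T x) p) /\
  ((exists a1 a2 a3 a4, ciric_with F T a1 a2 a3 a4 /\ (forall x y, a2 x y = a3 x y)) ->
   exists p, T p = p /\ (forall q, T q = q -> q = p) /\
             (forall x, converges F (fun n => Nat.iter n T x) p)).
Proof.
  intros HF Hsep Hcomp [a1 [a2 [a3 [a4 HC]]]].
  pose proof HC as [_ [[k [Hk1 Hk]] _]].
  pose proof (ciric_with_nonneg HC) as Hnonneg.
  assert (Hpm : forall rho, F rho -> is_pseudometric rho) by apply HF.
  pose proof (fun (rho : X -> X -> R) (Hr : F rho) => ciric_with_pm_contract HF HC Hr) as Hcontract.
  assert (Horbit : forall x, exists p, T p = p /\ converges F (fun n => Nat.iter n T x) p).
  { intros x. destruct (Hcomp (fun n => Nat.iter n T x)) as [p Hp].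
    - apply cauchy_of_pm_cauchy; intros rho Hr.
      exact (orbit_cauchy (Hpm rho Hr) Hnonneg Hk Hk1 (Hcontract rho Hr) x).
    - exists p; split; [| exact Hp].
      symmetry; apply (separated_eq_of_pm_zero Hsep); intros rho Hr.
      apply (orbit_limit_fixed (Hpm rho Hr) Hnonneg Hk Hk1 (Hcontract rho Hr) x).
      intros e He; exact (converges_pm Hp Hr He). }
  assert (Hunique : forall p q, T p = p -> T q = q -> q = p).
  { intros p q Hp Hq; apply (separated_eq_of_pm_zero Hsep); intros rho Hr.
    exact (fixed_points_dist_zero (Hpm rho Hr) Hnonneg Hk Hk1 (Hcontract rho Hr) q p Hq Hp). }
  split; [exact Horbit | intros _].
  destruct (Horbit x0) as [p [Hp _]].
  exists p; repeat split; [exact Hp | intros q Hq; exact (Hunique p q Hp Hq) |].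
  intros x. destruct (Horbit x) as [p' [Hp' Hconv]].
  rewrite (Hunique p' p Hp' Hp). exact Hconv.
Qed.
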